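(* Let $\Gamma$ be a regular axis-parallel square grid in the plane whose squares have diameter $1$ (side length $1/\sqrt{2}$), and call the open squares of $\Gamma$ cells. Consider two cells $\pi$ and $\pi'$. Let $p_1,p_2$ be any two points in $\pi'$ and $p_3,p_4$ be any two points in $\pi$. For points $x,y$ let $D(x,y)$ denote the closed disk having segment $xy$ as a diameter, and let $\mathcal{D}=D(p_1,p_2)\cup D(p_2,p_3)\cup D(p_3,p_4)$. Then: 1. If $|p_2p_3|\le 1/\sqrt{2}$, then $\mathcal{D}$ intersects at most $8$ cells. 2. If $|p_2p_3|\le 1$ and $\pi,\pi'$ are $+$-neighbors, then $\mathcal{D}$ intersects at most $8$ cells. 3. If $|p_2p_3|\le 1$ and $\pi,\pi'$ are $\times$-neighbors, then $\mathcal{D}$ intersects at most $10$ cells. 4. If $|p_2p_3|\le 1$ and $\pi,\pi'$ are not neighbors, then $\mathcal{D}$ intersects at most $11$ cells.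
   Context: The neighbors of a cell $\pi$ are the eight cells sharing a side or a corner with $\pi$. These are partitioned into the four $+$-neighbors (cells sharing a side with $\pi$) and the four $\times$-neighbors (cells sharing exactly one grid point with $\pi$). Cells are open (they do not contain their boundary), and disks are closed. *)

From Stdlib Require Export Reals Lra ZArith List.
Open Scope R_scope.

Definition point := (R * R)%type.

Definition dist (p q : point) : R :=
  sqrt ((fst p - fst q)^2 + (snd p - snd q)^2).

Definition side : R := 1 / sqrt 2.

(* A grid Gamma is given by an offset (ox, oy); cells are indexed by Z*Z. *)
Definition cell := (Z * Z)%type.

Definition in_cell (o : point) (c : cell) (z : point) : Prop :=
  fst o + IZR (fst c) * side < fst z < fst o + IZR (fst c + 1) * side /\
  snd o + IZR (snd c) * side < snd z < snd o + IZR (snd c + 1) * side.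

Definition mid (x y : point) : point := ((fst x + fst y) / 2, (snd x + snd y) / 2).
Definition in_disk (x y z : point) : Prop := dist z (mid x y) <= dist x y / 2.

Definition meets (o : point) (S : point -> Prop) (c : cell) : Prop :=
  exists z, S z /\ in_cell o c z.

Definition at_most_cells (o : point) (S : point -> Prop) (n : nat) : Prop :=
  exists L : list cell, (length L <= n)%nat /\ forall c, meets o S c -> In c L.

Definition plus_neighbors (c c' : cell) : Prop :=
  (Z.abs (fst c - fst c') + Z.abs (snd c - snd c') = 1)%Z.
Definition times_neighbors (c c' : cell) : Prop :=
  Z.abs (fst c - fst c') = 1%Z /\ Z.abs (snd c - snd c') = 1%Z.
Definition neighbors (c c' : cell) : Prop := plus_neighbors c c' \/ times_neighbors c c'.

Definition Dunion (p1 p2 p3 p4 : point) (z : point) : Prop :=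
  in_disk p1 p2 z \/ in_disk p2 p3 z \/ in_disk p3 p4 z.

From Stdlib Require Import Lia Psatz Classical.
Import ListNotations.

(* In coordinates measured in units of the cell side from the grid offset, cells are the open
   unit squares (k, k+1) x (l, l+1), and by Thales z lies in D(x,y) iff (z-x).(z-y) <= 0.
   For |xy|^2 <= 2 the centre (x+y)/2 is within distance 1 of every point of D(x,y) in each
   coordinate, so a cell (k,l) met by D(x,y), with x in (i1,j1) and y in (i2,j2), satisfies
   |2k - i1 - i2| < 4 and |2l - j1 - j2| < 4; moreover no point of D(x,y) lies strictly beyond
   both x and y in both coordinates, as the angle xzy would be acute there.  By the symmetries
   of the grid we may take pi' = (0,0) and pi = (a,b) with 0 <= b <= a, and the distance bound
   leaves the offsets (0,0), (1,0), (1,1), (2,0), (2,1), where these windows are enumerated.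
   Two more facts cut the count: such a disk cannot meet two cells three apart in a row or a
   column, and for the offsets (1,1) (with |xy|^2 <= 1) and (2,1) a quadratic estimate shows
   that the angle is acute on a few more cells. *)

Definition in_unit_cell (c : cell) (z : point) : Prop :=
  IZR (fst c) < fst z < IZR (fst c) + 1 /\ IZR (snd c) < snd z < IZR (snd c) + 1.

(* Thales: [z] lies in the closed disk with diameter [xy] iff the angle [xzy] is not acute. *)
Definition in_diam_disk (x y z : point) : Prop :=
  (fst z - fst x) * (fst z - fst y) + (snd z - snd x) * (snd z - snd y) <= 0.

Definition sqdist (x y : point) : R := (fst x - fst y)^2 + (snd x - snd y)^2.

Definition chain_union (p1 p2 p3 p4 z : point) : Prop :=
  in_diam_disk p1 p2 z \/ in_diam_disk p2 p3 z \/ in_diam_disk p3 p4 z.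

Definition meets_unit (S : point -> Prop) (c : cell) : Prop :=
  exists z, S z /\ in_unit_cell c z.

Definition unit_cells_at_most (S : point -> Prop) (n : nat) : Prop :=
  exists L : list cell, (length L <= n)%nat /\ forall c, meets_unit S c -> In c L.

Lemma diam_disk_center_bound x y z : in_diam_disk x y z ->
  (2 * fst z - fst x - fst y)^2 <= sqdist x y /\ (2 * snd z - snd x - snd y)^2 <= sqdist x y.
Proof.
  (* |2z - x - y|^2 = 4 (z - x).(z - y) + |x - y|^2 *)
  unfold in_diam_disk, sqdist; intros H.
  assert (0 <= (2 * fst z - fst x - fst y)^2) by apply pow2_ge_0.
  assert (0 <= (2 * snd z - snd x - snd y)^2) by apply pow2_ge_0.
  split; nra.
Qed.

Lemma diam_disk_spread x y z w : in_diam_disk x y z -> in_diam_disk x y w ->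
  (fst z - fst w)^2 <= sqdist x y /\ (snd z - snd w)^2 <= sqdist x y.
Proof.
  intros Hz Hw.
  destruct (diam_disk_center_bound _ _ _ Hz), (diam_disk_center_bound _ _ _ Hw).
  (* (a - b)^2 <= ((2a - s)^2 + (2b - s)^2) / 2 *)
  assert (0 <= (2 * fst z + 2 * fst w - 2 * fst x - 2 * fst y)^2) by apply pow2_ge_0.
  assert (0 <= (2 * snd z + 2 * snd w - 2 * snd x - 2 * snd y)^2) by apply pow2_ge_0.
  split; nra.
Qed.

Definition beyond (a b c : R) : Prop := c < a /\ c < b \/ a < c /\ b < c.

Lemma diam_disk_not_beyond x y z : in_diam_disk x y z ->
  ~ (beyond (fst x) (fst y) (fst z) /\ beyond (snd x) (snd y) (snd z)).
Proof. unfold in_diam_disk, beyond; intros H [[[]|[]] [[]|[]]]; nra. Qed.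

Definition beyond_Z (i j k : Z) : Prop := (k < i /\ k < j \/ i < k /\ j < k)%Z.

Definition disk_window (c1 c2 c : cell) : Prop :=
  (fst c1 + fst c2 - 4 < 2 * fst c < fst c1 + fst c2 + 4)%Z /\
  (snd c1 + snd c2 - 4 < 2 * snd c < snd c1 + snd c2 + 4)%Z /\
  ~ (beyond_Z (fst c1) (fst c2) (fst c) /\ beyond_Z (snd c1) (snd c2) (snd c)).

Lemma IZR_lt_succ (k i : Z) : (k < i)%Z -> IZR k + 1 <= IZR i.
Proof. intros; rewrite <- plus_IZR; apply IZR_le; lia. Qed.

Lemma beyond_of_unit_cells (i j k : Z) (a b c : R) :
  IZR i < a < IZR i + 1 -> IZR j < b < IZR j + 1 -> IZR k < c < IZR k + 1 ->
  beyond_Z i j k -> beyond a b c.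
Proof.
  unfold beyond_Z, beyond; intros Ha Hb Hc [[Hi Hj]|[Hi Hj]];
    apply IZR_lt_succ in Hi, Hj; lra.
Qed.

Lemma diam_disk_window x y c1 c2 c :
  in_unit_cell c1 x -> in_unit_cell c2 y -> sqdist x y <= 2 ->
  meets_unit (in_diam_disk x y) c -> disk_window c1 c2 c.
Proof.
  intros [Hx1 Hx2] [Hy1 Hy2] Hd [z [Hz [Hz1 Hz2]]].
  destruct (diam_disk_center_bound _ _ _ Hz) as [C1 C2].
  assert (-2 < 2 * fst z - fst x - fst y < 2) by (split; nra).
  assert (-2 < 2 * snd z - snd x - snd y < 2) by (split; nra).
  split; [|split].
  - split; apply lt_IZR; rewrite ?minus_IZR, ?plus_IZR, ?mult_IZR; lra.
  - split; apply lt_IZR; rewrite ?minus_IZR, ?plus_IZR, ?mult_IZR; lra.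
  - intros [B1 B2]; apply (diam_disk_not_beyond _ _ _ Hz);
      split; eapply beyond_of_unit_cells; eauto.
Qed.

Lemma same_cell_sqdist c x y : in_unit_cell c x -> in_unit_cell c y -> sqdist x y <= 2.
Proof. unfold in_unit_cell, sqdist; intros; nra. Qed.

Lemma small_disk_meets_not_both x y c1 c2 : sqdist x y <= 2 ->
  (fst c1 + 3 <= fst c2 \/ snd c1 + 3 <= snd c2)%Z ->
  ~ (meets_unit (in_diam_disk x y) c1 /\ meets_unit (in_diam_disk x y) c2).
Proof.
  intros Hd Hc [[z [Hz Hzc]] [w [Hw Hwc]]].
  destruct (diam_disk_spread _ _ _ _ Hw Hz) as [S1 S2].
  unfold in_unit_cell in *.
  destruct Hc as [Hc|Hc]; apply IZR_le in Hc; rewrite plus_IZR in Hc; nra.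
Qed.

Lemma meets_at_most_one (S : point -> Prop) c1 c2 :
  ~ (meets_unit S c1 /\ meets_unit S c2) ->
  exists e, (meets_unit S c1 -> c1 = e) /\ (meets_unit S c2 -> c2 = e).
Proof.
  intros H; destruct (classic (meets_unit S c1)) as [H1|H1].
  - exists c1; split; [reflexivity | tauto].
  - exists c2; split; [tauto | reflexivity].
Qed.

Lemma small_disk_meets_one_of x y c1 c2 : sqdist x y <= 2 ->
  (fst c1 + 3 <= fst c2 \/ snd c1 + 3 <= snd c2)%Z ->
  exists e, (meets_unit (in_diam_disk x y) c1 -> c1 = e) /\
            (meets_unit (in_diam_disk x y) c2 -> c2 = e).
Proof. intros Hd Hc; apply meets_at_most_one, small_disk_meets_not_both; assumption. Qed.

Lemma short_diagonal_acute x1 x2 y1 y2 u v :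
  0 < x1 < 1 -> 0 < x2 < 1 -> 1 < y1 < 2 -> 1 < y2 < 2 ->
  (x1 - y1)^2 + (x2 - y2)^2 <= 1 -> 2 < u -> 0 < v < 1 ->
  0 < (u - x1) * (u - y1) + (v - x2) * (v - y2).
Proof.
  intros.
  assert (0 < (u - x1 - 1) * (u - y1)) by (apply Rmult_lt_0_compat; lra).
  assert ((v - x2) * (v - y2) >= - (y2 - x2)^2 / 4)
    by (assert (0 <= (2 * v - x2 - y2)^2) by apply pow2_ge_0; nra).
  assert ((y1 - x1)^2 > (y1 - 1)^2) by nra.
  nra.
Qed.

Lemma knight_acute x1 x2 y1 y2 u v :
  0 < x1 < 1 -> 0 < x2 < 1 -> 2 < y1 < 3 -> 1 < y2 < 2 ->
  (x1 - y1)^2 + (x2 - y2)^2 <= 2 -> 2 < u -> v < 0 ->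
  0 < (u - x1) * (u - y1) + (v - x2) * (v - y2).
Proof.
  intros.
  assert (0 < (u - 2) * (u - x1 - y1 + 2)) by (apply Rmult_lt_0_compat; lra).
  assert (0 < (x2 - v) * (y2 - v - 1)) by (apply Rmult_lt_0_compat; lra).
  assert ((y2 - x2)^2 > (1 - x2)^2) by nra.
  assert (x2 > (1 - x1) + (y1 - 2)) by nra.
  assert ((y1 - 2) * (1 - x1) < 1 - x1) by nra.
  nra.
Qed.

Lemma short_diagonal_disk_misses x y :
  in_unit_cell (0,0)%Z x -> in_unit_cell (1,1)%Z y -> sqdist x y <= 1 ->
  let D := meets_unit (in_diam_disk x y) in
  ~ D (2,0)%Z /\ ~ D (-1,1)%Z /\ ~ D (0,2)%Z /\ ~ D (1,-1)%Z.
Proof.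
  destruct x as [x1 x2], y as [y1 y2]; unfold in_unit_cell, sqdist; cbn [fst snd].
  intros Hx Hy Hd; repeat split; intros [[u v] [Hz Hc]];
    unfold in_diam_disk, in_unit_cell in Hz, Hc; cbn [fst snd] in Hz, Hc.
  - pose proof (short_diagonal_acute x1 x2 y1 y2 u v); lra.
  - pose proof (short_diagonal_acute (2-y1) (2-y2) (2-x1) (2-x2) (2-u) (2-v)); nra.
  - pose proof (short_diagonal_acute x2 x1 y2 y1 v u); lra.
  - pose proof (short_diagonal_acute (2-y2) (2-y1) (2-x2) (2-x1) (2-v) (2-u)); nra.
Qed.

Lemma knight_disk_misses x y :
  in_unit_cell (0,0)%Z x -> in_unit_cell (2,1)%Z y -> sqdist x y <= 2 ->
  let D := meets_unit (in_diam_disk x y) in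
  ~ D (2,-1)%Z /\ ~ D (0,2)%Z.
Proof.
  destruct x as [x1 x2], y as [y1 y2]; unfold in_unit_cell, sqdist; cbn [fst snd].
  intros Hx Hy Hd; split; intros [[u v] [Hz Hc]];
    unfold in_diam_disk, in_unit_cell in Hz, Hc; cbn [fst snd] in Hz, Hc.
  - pose proof (knight_acute x1 x2 y1 y2 u v); lra.
  - pose proof (knight_acute (3-y1) (2-y2) (3-x1) (2-x2) (3-u) (2-v)); nra.
Qed.

Lemma chain_union_windows pi' pi p1 p2 p3 p4 c :
  in_unit_cell pi' p1 -> in_unit_cell pi' p2 -> in_unit_cell pi p3 -> in_unit_cell pi p4 ->
  sqdist p2 p3 <= 2 -> meets_unit (chain_union p1 p2 p3 p4) c ->
  disk_window pi' pi' c \/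
  (meets_unit (in_diam_disk p2 p3) c /\ disk_window pi' pi c) \/
  disk_window pi pi c.
Proof.
  intros H1 H2 H3 H4 Hd [z [[Hz|[Hz|Hz]] Hc]].
  - left; apply (diam_disk_window p1 p2); eauto using same_cell_sqdist; now exists z.
  - right; left; split; [|apply (diam_disk_window p2 p3)]; auto; now exists z.
  - right; right; apply (diam_disk_window p3 p4); eauto using same_cell_sqdist; now exists z.
Qed.

Lemma Z_box_cases (k : Z) : (-2 <= k <= 4)%Z ->
  (k = -2 \/ k = -1 \/ k = 0 \/ k = 1 \/ k = 2 \/ k = 3 \/ k = 4)%Z.
Proof. lia. Qed.

(* All cells involved lie in [-2, 4]^2.  A candidate cell is outside its window, ruled out
   by a [~ meets_unit] fact, identified with [e] by [small_disk_meets_one_of], or listed. *)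
Ltac check_chain_cells H1 H2 H3 H4 Hd :=
  split; [reflexivity|];
  let k := fresh "k" in let l := fresh "l" in let Hc := fresh "Hc" in
  intros [k l] Hc;
  destruct (chain_union_windows _ _ _ _ _ _ _ H1 H2 H3 H4 Hd Hc) as [W|[[HM W]|W]];
  unfold disk_window, beyond_Z in W; cbn [fst snd] in W;
  destruct (Z_box_cases k ltac:(lia)) as [->|[->|[->|[->|[->|[->| ->]]]]]];
  destruct (Z_box_cases l ltac:(lia)) as [->|[->|[->|[->|[->|[->| ->]]]]]];
  first
    [ exfalso; lia
    | contradiction
    | match goal with H : ?P -> ?c = _, HP : ?P |- In ?c _ => rewrite (H HP) end;
      simpl; intuition
    | simpl; intuition ].

Lemma chain_same_cell p1 p2 p3 p4 :
  in_unit_cell (0,0)%Z p1 -> in_unit_cell (0,0)%Z p2 ->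
  in_unit_cell (0,0)%Z p3 -> in_unit_cell (0,0)%Z p4 ->
  unit_cells_at_most (chain_union p1 p2 p3 p4) 5.
Proof.
  intros H1 H2 H3 H4; pose proof (same_cell_sqdist _ _ _ H2 H3) as Hd.
  exists [(0,0); (1,0); (-1,0); (0,1); (0,-1)]%Z; check_chain_cells H1 H2 H3 H4 Hd.
Qed.

Lemma chain_plus_neighbors p1 p2 p3 p4 :
  in_unit_cell (0,0)%Z p1 -> in_unit_cell (0,0)%Z p2 ->
  in_unit_cell (1,0)%Z p3 -> in_unit_cell (1,0)%Z p4 -> sqdist p2 p3 <= 2 ->
  unit_cells_at_most (chain_union p1 p2 p3 p4) 8.
Proof.
  intros H1 H2 H3 H4 Hd.
  exists [(0,0); (1,0); (0,-1); (1,-1); (0,1); (1,1); (-1,0); (2,0)]%Z.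
  check_chain_cells H1 H2 H3 H4 Hd.
Qed.

Lemma chain_short_diagonal p1 p2 p3 p4 :
  in_unit_cell (0,0)%Z p1 -> in_unit_cell (0,0)%Z p2 ->
  in_unit_cell (1,1)%Z p3 -> in_unit_cell (1,1)%Z p4 -> sqdist p2 p3 <= 1 ->
  unit_cells_at_most (chain_union p1 p2 p3 p4) 8.
Proof.
  intros H1 H2 H3 H4 Hd1; assert (Hd : sqdist p2 p3 <= 2) by lra.
  destruct (short_diagonal_disk_misses _ _ H2 H3 Hd1) as (M1 & M2 & M3 & M4).
  exists [(0,0); (1,0); (0,1); (1,1); (-1,0); (0,-1); (2,1); (1,2)]%Z.
  check_chain_cells H1 H2 H3 H4 Hd.
Qed.

Lemma chain_diagonal p1 p2 p3 p4 :
  in_unit_cell (0,0)%Z p1 -> in_unit_cell (0,0)%Z p2 ->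
  in_unit_cell (1,1)%Z p3 -> in_unit_cell (1,1)%Z p4 -> sqdist p2 p3 <= 2 ->
  unit_cells_at_most (chain_union p1 p2 p3 p4) 10.
Proof.
  intros H1 H2 H3 H4 Hd.
  destruct (small_disk_meets_one_of p2 p3 (-1,1)%Z (2,0)%Z Hd) as (e1 & E1 & E1');
    [cbn; lia|].
  destruct (small_disk_meets_one_of p2 p3 (1,-1)%Z (0,2)%Z Hd) as (e2 & E2 & E2');
    [cbn; lia|].
  exists [(0,0); (1,0); (0,1); (1,1); (-1,0); (0,-1); (2,1); (1,2); e1; e2]%Z.
  check_chain_cells H1 H2 H3 H4 Hd.
Qed.

Lemma chain_straight_gap p1 p2 p3 p4 :
  in_unit_cell (0,0)%Z p1 -> in_unit_cell (0,0)%Z p2 ->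
  in_unit_cell (2,0)%Z p3 -> in_unit_cell (2,0)%Z p4 -> sqdist p2 p3 <= 2 ->
  unit_cells_at_most (chain_union p1 p2 p3 p4) 11.
Proof.
  intros H1 H2 H3 H4 Hd.
  exists [(0,-1); (1,-1); (2,-1); (0,0); (1,0); (2,0); (0,1); (1,1); (2,1); (-1,0); (3,0)]%Z.
  check_chain_cells H1 H2 H3 H4 Hd.
Qed.

Lemma chain_knight p1 p2 p3 p4 :
  in_unit_cell (0,0)%Z p1 -> in_unit_cell (0,0)%Z p2 ->
  in_unit_cell (2,1)%Z p3 -> in_unit_cell (2,1)%Z p4 -> sqdist p2 p3 <= 2 ->
  unit_cells_at_most (chain_union p1 p2 p3 p4) 11.
Proof.
  intros H1 H2 H3 H4 Hd.
  destruct (knight_disk_misses _ _ H2 H3 Hd) as (M1 & M2).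
  destruct (small_disk_meets_one_of p2 p3 (1,-1)%Z (1,2)%Z Hd) as (e & E & E'); [cbn; lia|].
  exists [(0,0); (1,0); (2,0); (0,1); (1,1); (2,1); (-1,0); (3,1); (0,-1); (2,2); e]%Z.
  check_chain_cells H1 H2 H3 H4 Hd.
Qed.

(* The thresholds 1 and 2 on [sqdist] are |p2p3| <= 1/sqrt 2 and |p2p3| <= 1 in unit-side
   coordinates. *)
Definition chain_bounds (pi' pi : cell) (p1 p2 p3 p4 : point) : Prop :=
  in_unit_cell pi' p1 -> in_unit_cell pi' p2 -> in_unit_cell pi p3 -> in_unit_cell pi p4 ->
  (sqdist p2 p3 <= 1 -> unit_cells_at_most (chain_union p1 p2 p3 p4) 8) /\
  (sqdist p2 p3 <= 2 -> plus_neighbors pi pi' -> unit_cells_at_most (chain_union p1 p2 p3 p4) 8) /\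
  (sqdist p2 p3 <= 2 -> times_neighbors pi pi' -> unit_cells_at_most (chain_union p1 p2 p3 p4) 10) /\
  (sqdist p2 p3 <= 2 -> ~ neighbors pi pi' -> unit_cells_at_most (chain_union p1 p2 p3 p4) 11).

Section GridSymmetry.

Variables (f : point -> point) (g g_inv : cell -> cell).
Hypothesis f_unit_cell : forall c z, in_unit_cell c z -> in_unit_cell (g c) (f z).
Hypothesis f_diam_disk : forall x y z, in_diam_disk x y z -> in_diam_disk (f x) (f y) (f z).
Hypothesis f_sqdist : forall x y, sqdist (f x) (f y) = sqdist x y.
Hypothesis g_plus_neighbors : forall c c', plus_neighbors (g c) (g c') <-> plus_neighbors c c'.
Hypothesis g_times_neighbors : forall c c', times_neighbors (g c) (g c') <-> times_neighbors c c'.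
Hypothesis g_invK : forall c, g_inv (g c) = c.

Lemma unit_cells_at_most_sym p1 p2 p3 p4 n :
  unit_cells_at_most (chain_union (f p1) (f p2) (f p3) (f p4)) n ->
  unit_cells_at_most (chain_union p1 p2 p3 p4) n.
Proof.
  intros [L [HL HS]]; exists (map g_inv L); rewrite length_map; split; [exact HL|].
  intros c [z [Hz Hc]]; rewrite <- (g_invK c); apply in_map, HS.
  exists (f z); split; [|auto].
  destruct Hz as [Hz|[Hz|Hz]]; [left|right; left|right; right]; auto.
Qed.

Lemma chain_bounds_sym pi' pi p1 p2 p3 p4 :
  chain_bounds (g pi') (g pi) (f p1) (f p2) (f p3) (f p4) -> chain_bounds pi' pi p1 p2 p3 p4.
Proof.
  intros HB H1 H2 H3 H4.
  destruct (HB (f_unit_cell _ _ H1) (f_unit_cell _ _ H2) (f_unit_cell _ _ H3) (f_unit_cell _ _ H4))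
    as (B1 & B2 & B3 & B4).
  rewrite f_sqdist in B1, B2, B3, B4.
  unfold neighbors in *; rewrite g_plus_neighbors, g_times_neighbors in *.
  split; [|split; [|split]]; intros; apply unit_cells_at_most_sym; auto.
Qed.

End GridSymmetry.

Ltac grid_symmetry f g g_inv :=
  apply (chain_bounds_sym f g g_inv);
  [ intros [? ?] [? ?]; unfold in_unit_cell; cbn [fst snd];
    rewrite ?minus_IZR, ?opp_IZR; lra
  | intros [? ?] [? ?] [? ?]; unfold in_diam_disk; cbn [fst snd]; intros; lra
  | intros [? ?] [? ?]; unfold sqdist; cbn [fst snd]; ring
  | intros [? ?] [? ?]; unfold plus_neighbors; cbn [fst snd]; lia
  | intros [? ?] [? ?]; unfold times_neighbors; cbn [fst snd]; lia
  | intros [? ?]; cbn [fst snd]; f_equal; lia ].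

Lemma chain_bounds_translate (m n : Z) pi' pi p1 p2 p3 p4 :
  let f (z : point) := (fst z - IZR m, snd z - IZR n) in
  let g (c : cell) := (fst c - m, snd c - n)%Z in
  chain_bounds (g pi') (g pi) (f p1) (f p2) (f p3) (f p4) -> chain_bounds pi' pi p1 p2 p3 p4.
Proof.
  grid_symmetry (fun z : point => (fst z - IZR m, snd z - IZR n))
    (fun c : cell => (fst c - m, snd c - n)%Z) (fun c : cell => (fst c + m, snd c + n)%Z).
Qed.

Lemma chain_bounds_reflect pi' pi p1 p2 p3 p4 :
  let f (z : point) := (1 - fst z, snd z) in
  let g (c : cell) := (- fst c, snd c)%Z in
  chain_bounds (g pi') (g pi) (f p1) (f p2) (f p3) (f p4) -> chain_bounds pi' pi p1 p2 p3 p4.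
Proof.
  grid_symmetry (fun z : point => (1 - fst z, snd z))
    (fun c : cell => (- fst c, snd c)%Z) (fun c : cell => (- fst c, snd c)%Z).
Qed.

Lemma chain_bounds_swap pi' pi p1 p2 p3 p4 :
  let f (z : point) := (snd z, fst z) in
  let g (c : cell) := (snd c, fst c) in
  chain_bounds (g pi') (g pi) (f p1) (f p2) (f p3) (f p4) -> chain_bounds pi' pi p1 p2 p3 p4.
Proof.
  grid_symmetry (fun z : point => (snd z, fst z))
    (fun c : cell => (snd c, fst c)) (fun c : cell => (snd c, fst c)).
Qed.

Lemma chain_bounds_wlog :
  (forall a b p1 p2 p3 p4, (0 <= b <= a)%Z -> chain_bounds (0,0)%Z (a,b) p1 p2 p3 p4) ->
  forall pi' pi p1 p2 p3 p4, chain_bounds pi' pi p1 p2 p3 p4.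
Proof.
  intros Hcanon.
  assert (Hquadrant : forall a b p1 p2 p3 p4, (0 <= a)%Z -> (0 <= b)%Z ->
            chain_bounds (0,0)%Z (a,b) p1 p2 p3 p4).
  { intros a b p1 p2 p3 p4 Ha Hb; destruct (Z.le_gt_cases b a).
    - now apply Hcanon.
    - apply chain_bounds_swap, Hcanon; cbn; lia. }
  assert (Hall : forall a b p1 p2 p3 p4, chain_bounds (0,0)%Z (a,b) p1 p2 p3 p4).
  { intros a b p1 p2 p3 p4; destruct (Z.le_gt_cases 0 a), (Z.le_gt_cases 0 b).
    - now apply Hquadrant.
    - apply chain_bounds_swap, chain_bounds_reflect, chain_bounds_swap, Hquadrant; cbn; lia.
    - apply chain_bounds_reflect, Hquadrant; cbn; lia.
    - apply chain_bounds_reflect, chain_bounds_swap, chain_bounds_reflect,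
        chain_bounds_swap, Hquadrant; cbn; lia. }
  intros [m n] [a b] p1 p2 p3 p4; apply (chain_bounds_translate m n); cbn [fst snd].
  rewrite !Z.sub_diag; apply Hall.
Qed.

Lemma offset_of_sqdist_le_1 a b x y :
  in_unit_cell (0,0)%Z x -> in_unit_cell (a,b) y -> (0 <= b <= a)%Z -> sqdist x y <= 1 ->
  (a <= 1)%Z.
Proof.
  destruct x as [x1 x2], y as [y1 y2]; unfold in_unit_cell, sqdist; cbn [fst snd].
  intros Hx Hy Hab Hd; destruct (Z.le_gt_cases a 1) as [|Ha]; [assumption|exfalso].
  apply IZR_lt_succ in Ha.
  assert (0 <= (x2 - y2)^2) by apply pow2_ge_0; nra.
Qed.

Lemma offset_of_sqdist_le_2 a b x y :
  in_unit_cell (0,0)%Z x -> in_unit_cell (a,b) y -> (0 <= b <= a)%Z -> sqdist x y <= 2 ->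
  (a <= 2 /\ ~ (a = 2 /\ b = 2))%Z.
Proof.
  destruct x as [x1 x2], y as [y1 y2]; unfold in_unit_cell, sqdist; cbn [fst snd].
  intros Hx Hy Hab Hd; split.
  - destruct (Z.le_gt_cases a 2) as [|Ha]; [assumption|exfalso].
    apply IZR_lt_succ in Ha.
    assert (0 <= (x2 - y2)^2) by apply pow2_ge_0; nra.
  - intros [-> ->]; nra.
Qed.

Lemma unit_cells_at_most_weaken S m n :
  unit_cells_at_most S m -> (m <= n)%nat -> unit_cells_at_most S n.
Proof. intros [L [HL HS]] Hmn; exists L; split; [lia | exact HS]. Qed.

Lemma chain_bounds_canonical a b p1 p2 p3 p4 :
  (0 <= b <= a)%Z -> chain_bounds (0,0)%Z (a,b) p1 p2 p3 p4.
Proof.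
  intros Hab H1 H2 H3 H4; split; [|split; [|split]].
  - intros Hd; pose proof (offset_of_sqdist_le_1 _ _ _ _ H2 H3 Hab Hd).
    assert (a = 0 /\ b = 0 \/ a = 1 /\ b = 0 \/ a = 1 /\ b = 1)%Z
      as [[-> ->]|[[-> ->]|[-> ->]]] by lia.
    + eapply unit_cells_at_most_weaken; [apply chain_same_cell; auto | lia].
    + apply chain_plus_neighbors; auto; lra.
    + apply chain_short_diagonal; auto.
  - intros Hd Hn; unfold plus_neighbors in Hn; cbn [fst snd] in Hn.
    assert (a = 1 /\ b = 0)%Z as [-> ->] by lia.
    apply chain_plus_neighbors; auto.
  - intros Hd Hn; unfold times_neighbors in Hn; cbn [fst snd] in Hn.
    assert (a = 1 /\ b = 1)%Z as [-> ->] by lia.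
    apply chain_diagonal; auto.
  - intros Hd Hn; pose proof (offset_of_sqdist_le_2 _ _ _ _ H2 H3 Hab Hd).
    unfold neighbors, plus_neighbors, times_neighbors in Hn; cbn [fst snd] in Hn.
    assert (a = 0 /\ b = 0 \/ a = 2 /\ b = 0 \/ a = 2 /\ b = 1)%Z
      as [[-> ->]|[[-> ->]|[-> ->]]] by lia.
    + eapply unit_cells_at_most_weaken; [apply chain_same_cell; auto | lia].
    + apply chain_straight_gap; auto.
    + apply chain_knight; auto.
Qed.

Definition normalize (o z : point) : point :=
  ((fst z - fst o) * sqrt 2, (snd z - snd o) * sqrt 2).

Lemma side_mul_sqrt2 : side * sqrt 2 = 1.
Proof. unfold side; field; apply Rgt_not_eq, Rlt_sqrt2_0. Qed.

Lemma lt_side_sqrt2 a b : a * side < b -> a < b * sqrt 2.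
Proof.
  intros H; rewrite <- (Rmult_1_r a), <- side_mul_sqrt2, <- Rmult_assoc.
  apply Rmult_lt_compat_r; [apply Rlt_sqrt2_0 | exact H].
Qed.

Lemma gt_side_sqrt2 a b : b < a * side -> b * sqrt 2 < a.
Proof.
  intros H; rewrite <- (Rmult_1_r a), <- side_mul_sqrt2, <- Rmult_assoc.
  apply Rmult_lt_compat_r; [apply Rlt_sqrt2_0 | exact H].
Qed.

Lemma in_unit_cell_normalize o c z : in_cell o c z -> in_unit_cell c (normalize o z).
Proof.
  unfold in_cell, in_unit_cell, normalize; cbn [fst snd]; rewrite !plus_IZR.
  intros [[Hx1 Hx2] [Hy1 Hy2]]; repeat split;
    first [apply lt_side_sqrt2 | apply gt_side_sqrt2]; lra.
Qed.

Lemma sqdist_nonneg x y : 0 <= sqdist x y.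
Proof.
  unfold sqdist.
  assert (0 <= (fst x - fst y)^2) by apply pow2_ge_0.
  assert (0 <= (snd x - snd y)^2) by apply pow2_ge_0.
  lra.
Qed.

Lemma dist_sq x y : dist x y ^ 2 = sqdist x y.
Proof. apply pow2_sqrt, sqdist_nonneg. Qed.

Lemma in_disk_diam_disk x y z : in_disk x y z -> in_diam_disk x y z.
Proof.
  unfold in_disk; intros H.
  assert (Hsq : dist z (mid x y) ^ 2 <= (dist x y / 2) ^ 2)
    by (apply pow_incr; split; [apply sqrt_pos | exact H]).
  replace ((dist x y / 2) ^ 2) with (dist x y ^ 2 / 4) in Hsq by field.
  rewrite !dist_sq in Hsq.
  unfold sqdist, mid, in_diam_disk in *; cbn [fst snd] in *; lra.
Qed.

Lemma in_diam_disk_normalize o x y z :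
  in_diam_disk x y z -> in_diam_disk (normalize o x) (normalize o y) (normalize o z).
Proof.
  unfold in_diam_disk, normalize; cbn [fst snd]; intros H.
  pose proof (sqrt_sqrt 2 ltac:(lra)); nra.
Qed.

Lemma sqdist_normalize o x y : sqdist (normalize o x) (normalize o y) = 2 * dist x y ^ 2.
Proof.
  rewrite dist_sq; unfold sqdist, normalize; cbn [fst snd].
  transitivity ((sqrt 2 * sqrt 2) * ((fst x - fst y)^2 + (snd x - snd y)^2)); [ring|].
  rewrite sqrt_sqrt by lra; reflexivity.
Qed.

Lemma at_most_cells_normalize o p1 p2 p3 p4 n :
  unit_cells_at_most
    (chain_union (normalize o p1) (normalize o p2) (normalize o p3) (normalize o p4)) n ->
  at_most_cells o (Dunion p1 p2 p3 p4) n.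
Proof.
  intros [L [HL HS]]; exists L; split; [exact HL|].
  intros c [z [Hz Hc]]; apply HS; exists (normalize o z).
  split; [|now apply in_unit_cell_normalize].
  destruct Hz as [Hz|[Hz|Hz]]; [left|right; left|right; right];
    now apply in_diam_disk_normalize, in_disk_diam_disk.
Qed.

Theorem lemma6 (o : point) (pi pi' : cell) (p1 p2 p3 p4 : point) :
  in_cell o pi' p1 -> in_cell o pi' p2 -> in_cell o pi p3 -> in_cell o pi p4 ->
  (dist p2 p3 <= 1 / sqrt 2 -> at_most_cells o (Dunion p1 p2 p3 p4) 8) /\
  (dist p2 p3 <= 1 -> plus_neighbors pi pi' -> at_most_cells o (Dunion p1 p2 p3 p4) 8) /\
  (dist p2 p3 <= 1 -> times_neighbors pi pi' -> at_most_cells o (Dunion p1 p2 p3 p4) 10) /\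
  (dist p2 p3 <= 1 -> ~ neighbors pi pi' -> at_most_cells o (Dunion p1 p2 p3 p4) 11).
Proof.
  intros H1 H2 H3 H4.
  destruct (chain_bounds_wlog chain_bounds_canonical pi' pi
              (normalize o p1) (normalize o p2) (normalize o p3) (normalize o p4)
              (in_unit_cell_normalize _ _ _ H1) (in_unit_cell_normalize _ _ _ H2)
              (in_unit_cell_normalize _ _ _ H3) (in_unit_cell_normalize _ _ _ H4))
    as (B1 & B2 & B3 & B4).
  rewrite sqdist_normalize in B1, B2, B3, B4.
  assert (Hd0 : 0 <= dist p2 p3) by apply sqrt_pos.
  split; [|split; [|split]]; intros Hd; intros; apply at_most_cells_normalize.
  - apply B1; fold side in Hd.
    pose proof side_mul_sqrt2; pose proof (sqrt_sqrt 2 ltac:(lra)); nra.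
  - apply B2; auto; nra.
  - apply B3; auto; nra.
  - apply B4; auto; nra.
Qed.
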